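(* Let $\theta>2$, let $G=(\mu,\mathcal{V},\mathcal{W},\mathcal{E})$ be a $\theta$-maximal, non-trivial weighted bipartite graph, and let $w_0\in\mathcal{W}$. There exists a subgraph $G'=(\mu,\mathcal{V}',\mathcal{W}',\mathcal{E}')$ of $G$ such that: (a) $(v,w_0)\in \mathcal{E}'$ for all $v\in\mathcal{V}'$; (b) for all $w\in\mathcal{W}'$, there exists $v\in\mathcal{V}'$ such that $(v,w)\in\mathcal{E}'$; (c) $\mu^{(\theta)}(G)\le (1-1/\theta)^{-\theta} \mu^{(\theta-1)}(G')$.
   Context: A weighted bipartite graph is $G=(\mu,\mathcal{V},\mathcal{W},\mathcal{E})$ with $\mu:\mathbb{R}_{>0}\to\mathbb{R}_{>0}$, $\mathcal{V},\mathcal{W}$ finite sets of positive reals, $\mathcal{E}\subseteq\mathcal{V}\times\mathcal{W}$; it is non-trivial if $\mathcal{E}\ne\emptyset$. $\mu(\mathcal{T})=\sum_{t\in\mathcal{T}}\mu(t)$ and $\mu(\mathcal{E})=\sum_{(v,w)\in\mathcal{E}}\mu(v)\mu(w)$. Edge density $\delta(G)=\mu(\mathcal{E})/(\mu(\mathcal{V})\mu(\mathcal{W}))$ if $\mathcal{E}\ne\emptyset$, else $0$. For $\theta\ge1$, $\mu^{(\theta)}(G)=\delta(G)^\theta\mu(\mathcal{V})\mu(\mathcal{W})$. A subgraph of $G$ is $(\mu,\mathcal{V}',\mathcal{W}',\mathcal{E}')$ with $\mathcal{V}'\subseteq\mathcal{V}$, $\mathcal{W}'\subseteq\mathcal{W}$,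 $\mathcal{E}'\subseteq\mathcal{E}\cap(\mathcal{V}'\times\mathcal{W}')$. $G$ is $\theta$-maximal if $\mu^{(\theta)}(G)\ge\mu^{(\theta)}(G')$ for every subgraph $G'$. *)

From HB Require Import structures.
From mathcomp Require Import all_boot all_order all_algebra.
From mathcomp Require Import finmap.
From mathcomp Require Import all_classical all_reals.
From mathcomp Require Import exp.
Set Implicit Arguments. Unset Strict Implicit. Unset Printing Implicit Defensive.
Import Order.TTheory GRing.Theory Num.Theory.
Local Open Scope ring_scope.
Local Open Scope fset_scope.

Record wbgraph (R : realType) := WBGraph {
  wb_mu : R -> R;
  wb_V : {fset R};
  wb_W : {fset R};
  wb_E : {fset R * R}
}.

Definition wb_wf (R : realType) (G : wbgraph R) : Prop :=
  (forall x : R, 0 < x -> 0 < wb_mu G x) /\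
  (forall v, v \in wb_V G -> 0 < v) /\
  (forall w, w \in wb_W G -> 0 < w) /\
  (forall e, e \in wb_E G -> (e.1 \in wb_V G) && (e.2 \in wb_W G)).

Definition nontrivial (R : realType) (G : wbgraph R) : Prop := wb_E G != fset0.

Definition mu_set (R : realType) (mu : R -> R) (T : {fset R}) : R :=
  \sum_(t <- T) mu t.

Definition mu_edges (R : realType) (mu : R -> R) (E : {fset R * R}) : R :=
  \sum_(e <- E) mu e.1 * mu e.2.

Definition edge_density (R : realType) (G : wbgraph R) : R :=
  if wb_E G == fset0 then 0
  else mu_edges (wb_mu G) (wb_E G) /
       (mu_set (wb_mu G) (wb_V G) * mu_set (wb_mu G) (wb_W G)).

Definition mu_theta (R : realType) (theta : R) (G : wbgraph R) : R :=
  powR (edge_density G) theta * mu_set (wb_mu G) (wb_V G)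
    * mu_set (wb_mu G) (wb_W G).

Definition subgraph (R : realType) (G' G : wbgraph R) : Prop :=
  wb_mu G' = wb_mu G /\
  wb_V G' `<=` wb_V G /\
  wb_W G' `<=` wb_W G /\
  (forall e, e \in wb_E G' ->
     [&& e \in wb_E G, e.1 \in wb_V G' & e.2 \in wb_W G']).

Definition theta_maximal (R : realType) (theta : R) (G : wbgraph R) : Prop :=
  forall G' : wbgraph R, subgraph G' G -> mu_theta theta G' <= mu_theta theta G.

From HB Require Import structures.
From mathcomp Require Import all_boot all_order all_algebra.
From mathcomp Require Import finmap.
From mathcomp Require Import all_classical all_reals.
From mathcomp Require Import exp.
From mathcomp Require Import ring lra.
Set Implicit Arguments. Unset Strict Implicit. Unset Printing Implicit Defensive.
Import Order.TTheory GRing.Theory Num.Theory.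
Local Open Scope fset_scope.
Local Open Scope ring_scope.

(* Write c = 1 - 1/theta.  Deleting a single vertex z from a theta-maximal
   graph cannot increase mu^(theta).  If z carries the fraction x of the mass
   of its side and the fraction y of the edge mass, this reads
   (1 - y)^theta <= (1 - x)^(theta - 1), and the concavity bound
   (1 - x)^c <= 1 - c x turns it into y >= c x: every vertex of W has weighted
   degree at least c mu(E) / mu(W), every vertex of V at least c mu(E) / mu(V).
   Take V' = N(w0), W' = N(V') and E' the edges leaving V'.  The bound at w0
   gives mu(V') mu(W) >= c mu(E), the bounds on V' give
   mu(E') mu(V) >= c mu(E) mu(V'), whence c delta(G) <= delta(G'); as
   theta >= 2, delta^(theta - 2) is monotone and the estimates combine into
   c^theta mu^(theta)(G) <= mu^(theta - 1)(G'). *)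

Section PowerInequalities.
Variable R : realType.
Implicit Types (th a b e m t u v c z : R).

(* Young's inequality for the exponents 1/c and 1/(1-c), applied to z^c and 1. *)
Lemma powR_le_affine c z : 0 < c < 1 -> 0 <= z -> z `^ c <= c * z + (1 - c).
Proof.
move=> /andP[c0 c1] z0.
have ic0 : 0 < c^-1 by rewrite invr_gt0.
have ic'0 : 0 < (1 - c)^-1 by rewrite invr_gt0 subr_gt0.
have := conjugate_powR (powR_ge0 z c) ler01 ic0 ic'0.
rewrite !invrK addrC subrK => /(_ erefl).
by rewrite mulr1 -powRrM mulfV ?gt_eqF // powRr1 // powR1 mul1r mulrC.
Qed.

Lemma powR_ratio_bound th u v : 1 < th -> 0 < u <= 1 -> 0 <= v ->
  (v / u) `^ th * u <= 1 -> v <= 1 - (1 - 1 / th) * (1 - u).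
Proof.
move=> th1 /andP[u0 u1] v0 H.
have th0 : 0 < th := lt_trans ltr01 th1.
have q0 : 0 <= v / u by rewrite divr_ge0 // ltW.
have qth : (v / u) `^ th <= u `^ (-1).
  by rewrite (powR_inv1 (ltW u0)) -(ler_pM2r u0) mulVf ?gt_eqF.
have q_le : v / u <= u `^ (- (1 / th)).
  have := ge0_ler_powR (ltW (divr_gt0 ltr01 th0)) (powR_ge0 _ _) (powR_ge0 _ _) qth.
  by rewrite -!powRrM mulN1r mul1r mulfV ?gt_eqF // powRr1.
have v_le : v <= u `^ (1 - 1 / th).
  rewrite addrC powRD ?(gt_eqF u0) ?implybT // powRr1 ?(ltW u0) //.
  by rewrite -ler_pdivrMr.
have c01 : 0 < 1 - 1 / th < 1.
  by rewrite subr_gt0 gtrBl divr_gt0 // ltr_pdivrMr // mul1r th1.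
have -> : 1 - (1 - 1 / th) * (1 - u) = (1 - 1 / th) * u + (1 - (1 - 1 / th)) by ring.
exact: le_trans v_le (powR_le_affine c01 (ltW u0)).
Qed.

End PowerInequalities.

Section ThetaMeasure.
Variable R : realType.
Implicit Types (th a b e m t u d c : R).

Definition theta_measure th a b e : R := (e / (a * b)) `^ th * a * b.

Lemma theta_measureC th a b e : theta_measure th a b e = theta_measure th b a e.
Proof. by rewrite /theta_measure [b * a]mulrC mulrAC. Qed.

Lemma theta_measure_removal th a b e m t :
  1 < th -> 0 < a -> 0 < m <= b -> 0 <= t <= e -> (t < e -> m < b) ->
  theta_measure th a (b - m) (e - t) <= theta_measure th a b e ->
  (1 - 1 / th) * e * m <= t * b.
Proof.
move=> th1 a0 /andP[m0 mb] /andP[t0 te] tm H.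
have th0 : 0 < th := lt_trans ltr01 th1.
have c01 : 0 <= 1 - 1 / th <= 1.
  by rewrite subr_ge0 gerBl divr_ge0 ?ler01 ?(ltW th0) // andbT ler_pdivrMr // mul1r ltW.
have [<-|tne] := eqVneq t e.
  have tm0 : 0 <= t * m by rewrite mulr_ge0 // ltW.
  nra.
have lt_te : t < e by rewrite lt_neqAle tne te.
have bm0 : 0 < b - m by rewrite subr_gt0 tm.
have b0 : 0 < b := lt_le_trans m0 mb.
have e0 : 0 < e := le_lt_trans t0 lt_te.
set u := (b - m) / b; set v := (e - t) / e.
have u01 : 0 < u <= 1.
  by rewrite divr_gt0 //= ler_pdivrMr // mul1r gerBl ltW.
have v0 : 0 <= v by rewrite divr_ge0 ?subr_ge0 // ltW.
have D0 : 0 < (e / (a * b)) `^ th * a * b.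
  by rewrite !mulr_gt0 // powR_gt0 // divr_gt0 // mulr_gt0.
have bmE : b - m = u * b by rewrite /u divfK ?gt_eqF.
have D_ge0 : 0 <= e / (a * b) := divr_ge0 (ltW e0) (mulr_ge0 (ltW a0) (ltW b0)).
have Q_ge0 : 0 <= v / u := divr_ge0 v0 (ltW (andP u01).1).
have H_split : theta_measure th a (b - m) (e - t) =
               (e / (a * b)) `^ th * a * b * ((v / u) `^ th * u).
  rewrite /theta_measure (_ : (e - t) / (a * (b - m)) = e / (a * b) * (v / u)).
    by rewrite (powRM _ D_ge0 Q_ge0) bmE; ring.
  by rewrite /u /v; field; rewrite !gt_eqF.
have vu_le : (v / u) `^ th * u <= 1.
  by rewrite -(ler_pM2l D0) mulr1 -H_split.
have := powR_ratio_bound th1 u01 v0 vu_le.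
rewrite -subr_ge0 (_ : _ - v = (t * b - (1 - 1 / th) * e * m) / (e * b)).
  by rewrite pmulr_lge0 ?subr_ge0 // invr_gt0 mulr_gt0.
by rewrite /u /v; field; rewrite !gt_eqF.
Qed.

Lemma powR_mass_step th u d a b a' b' : 2 <= th -> 0 <= u -> 0 <= a -> 0 <= b ->
  u <= d -> u * a <= a' -> u * b <= d * b' ->
  u `^ th * a * b <= d `^ (th - 1) * a' * b'.
Proof.
move=> th2 u0 a0 b0 ud ua ub.
have d0 : 0 <= d := le_trans u0 ud.
have th10 : 0 < th - 1 by rewrite subr_gt0 (lt_le_trans _ th2) ?ltr1n.
have peel x : 0 <= x -> x `^ (th - 1) = x `^ (th - 2) * x.
  move=> x0; rewrite mulrC -mulr_powRB1 //; congr (_ * _ `^ _); ring.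
have -> : u `^ th * a * b = u `^ (th - 2) * (u * b) * (u * a).
  by rewrite -mulr_powRB1 ?(lt_le_trans _ th2) // peel //; ring.
rewrite peel // (_ : _ * d * a' * b' = d `^ (th - 2) * (d * b') * a'); last by ring.
have ge0_th2 : 0 <= th - 2 by rewrite subr_ge0.
apply: ler_pM; rewrite ?mulr_ge0 ?powR_ge0 //.
apply: ler_pM; rewrite ?mulr_ge0 ?powR_ge0 //.
exact: ge0_ler_powR.
Qed.

Lemma theta_measure_shrink th c a b e a' b' e' :
  2 <= th -> 0 < c -> 0 < a -> 0 < b -> 0 <= e -> 0 < a' -> 0 < b' -> 0 <= e' ->
  b' <= b -> c * e <= a' * b -> c * e * a' <= e' * a ->
  theta_measure th a b e <= c `^ (- th) * theta_measure (th - 1) a' b' e'.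
Proof.
move=> th2 c0 a0 b0 e0 a'0 b'0 e'0 b'b h1 h2.
set d := e / (a * b); set d' := e' / (a' * b').
have d0 : 0 <= d by rewrite divr_ge0 // mulr_ge0 // ltW.
have d'0 : 0 <= d' by rewrite divr_ge0 // mulr_ge0 // ltW.
have cd_a : c * d * a <= a'.
  rewrite -(ler_pM2r b0) (_ : c * d * a * b = c * e) //.
  by rewrite /d; field; rewrite !gt_eqF.
have cd_b : c * d * b <= d' * b'.
  rewrite (_ : c * d * b = c * e / a); last by rewrite /d; field; rewrite !gt_eqF.
  rewrite (_ : d' * b' = e' / a'); last by rewrite /d'; field; rewrite !gt_eqF.
  by rewrite ler_pdivrMr // mulrAC ler_pdivlMr.
have cd_d' : c * d <= d'.
  by rewrite -(ler_pM2r b0) (le_trans cd_b) // ler_wpM2l.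
have cthK : c `^ (- th) * c `^ th = 1 by rewrite powRN mulVf // gt_eqF // powR_gt0.
have := powR_mass_step th2 (mulr_ge0 (ltW c0) d0) (ltW a0) (ltW b0) cd_d' cd_a cd_b.
rewrite powRM ?(ltW c0) // -!mulrA -(ler_pM2l (powR_gt0 (- th) c0)).
by rewrite [X in X <= _]mulrA cthK mul1r /theta_measure -/d -/d' -!mulrA.
Qed.

End ThetaMeasure.

Section FsetSums.
Variable R : numDomainType.

Lemma sum_fset_le_subset (T : choiceType) (A B : {fset T}) (F : T -> R) :
  (A `<=` B) -> {in B, forall x, 0 <= F x} ->
  \sum_(x <- A) F x <= \sum_(x <- B) F x.
Proof.
move=> AB F0; rewrite [X in _ <= X](big_fsetID _ (mem A)) /=.
rewrite (_ : [fset x in B | x \in A] = A) ?lerDl.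
  by rewrite big_seq sumr_ge0 // => x; rewrite !inE => /andP[/F0].
by apply/fsetP => x; rewrite !inE andbC; case: (boolP (x \in A)) => // /(fsubsetP AB).
Qed.

Lemma sum_fset_ge_term (T : choiceType) (A : {fset T}) (x : T) (F : T -> R) :
  x \in A -> {in A, forall y, 0 <= F y} -> F x <= \sum_(y <- A) F y.
Proof.
move=> xA F0; rewrite -[F x](big_seq_fset1 +%R); apply: sum_fset_le_subset F0.
by rewrite fsub1set.
Qed.

Lemma big_pred1_uniq (T : eqType) (s : seq T) (x : T) (F : T -> R) : uniq s ->
  \sum_(y <- s | y == x) F y = if x \in s then F x else 0.
Proof.
move=> s_uniq; case: ifP => xs.
  by rewrite -big_filter filter_pred1_uniq // big_seq1.
by rewrite big_seq_cond big1 // => y /andP[ys /eqP yx]; rewrite -yx ys in xs.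
Qed.

Lemma sum_fset_fibers (I J : choiceType) (E : {fset I}) (S : {fset J})
    (f : I -> J) (F : I -> R) :
  \sum_(i <- E | f i \in S) F i = \sum_(j <- S) \sum_(i <- E | f i == j) F i.
Proof.
rewrite (exchange_big_dep xpredT) //= big_mkcond /=; apply: eq_bigr => i _.
by rewrite (eq_bigl (pred1 (f i))) ?big_pred1_uniq // => j; rewrite /= eq_sym.
Qed.

End FsetSums.

Section WeightedDegree.
Variable R : realType.
Implicit Types (mu : R -> R) (A : {fset R}) (E : {fset R * R}) (G : wbgraph R).

(* The weighted degree of [x] as the [q]-endpoint of the edges in [E]: with
   [(p, q) = (fst, snd)] it is the degree of a vertex of W, with
   [(p, q) = (snd, fst)] that of a vertex of V. *)
Definition wdeg mu (p q : R * R -> R) E (x : R) : R :=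
  \sum_(e <- E | q e == x) mu (p e).

Lemma mu_set_gt0 mu A x : {in A, forall y, 0 < mu y} -> x \in A -> 0 < mu_set mu A.
Proof.
move=> mu0 xA; apply: lt_le_trans (mu0 _ xA) _.
by apply: sum_fset_ge_term => // y /mu0 /ltW.
Qed.

Lemma mu_edges_ge0 mu E : {in E, forall e, 0 <= mu e.1 * mu e.2} -> 0 <= mu_edges mu E.
Proof. by move=> E0; rewrite /mu_edges big_seq sumr_ge0. Qed.

Lemma mu_edges_gt0 mu E :
  {in E, forall e, 0 < mu e.1 * mu e.2} -> E != fset0 -> 0 < mu_edges mu E.
Proof.
move=> E0 /fset0Pn[e eE]; apply: lt_le_trans (E0 _ eE) _.
by apply: (sum_fset_ge_term (F := fun e => mu e.1 * mu e.2) eE) => e' /E0/ltW.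
Qed.

Lemma mu_thetaE th G : mu_theta th G =
  theta_measure th (mu_set (wb_mu G) (wb_V G)) (mu_set (wb_mu G) (wb_W G))
    (mu_edges (wb_mu G) (wb_E G)).
Proof.
rewrite /mu_theta /theta_measure /edge_density; case: ifP => // /eqP ->.
by rewrite /mu_edges big_seq_fset0 mul0r.
Qed.

Lemma wb_wf_muV G : wb_wf G -> {in wb_V G, forall v, 0 < wb_mu G v}.
Proof. by case=> mu0 [V0 _] v /V0 /mu0. Qed.

Lemma wb_wf_muW G : wb_wf G -> {in wb_W G, forall w, 0 < wb_mu G w}.
Proof. by case=> mu0 [_ [W0 _]] w /W0 /mu0. Qed.

Lemma wb_wf_edge G e : wb_wf G -> e \in wb_E G -> e.1 \in wb_V G /\ e.2 \in wb_W G.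
Proof. by case=> _ [_ [_ EVW]] /EVW /andP. Qed.

Lemma wb_wf_edge_weight G e : wb_wf G -> e \in wb_E G -> 0 < wb_mu G e.1 * wb_mu G e.2.
Proof.
move=> wfG /(wb_wf_edge wfG)[/(wb_wf_muV wfG) ? /(wb_wf_muW wfG) ?].
exact: mulr_gt0.
Qed.

End WeightedDegree.

Section VertexRemoval.
Variable R : realType.
Variables (mu : R -> R) (p q : R * R -> R) (A B : {fset R}) (E : {fset R * R}).
Hypothesis pq : (p = fst /\ q = snd) \/ (p = snd /\ q = fst).
Hypothesis muA : {in A, forall x, 0 < mu x}.
Hypothesis muB : {in B, forall x, 0 < mu x}.
Hypothesis E_sub : {in E, forall e, p e \in A /\ q e \in B}.

Let edge_weightE e : mu e.1 * mu e.2 = mu (p e) * mu (q e).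
Proof. by case: pq => -[-> ->] //; rewrite mulrC. Qed.

Let edge_weight_gt0 e : e \in E -> 0 < mu e.1 * mu e.2.
Proof. by move=> /E_sub[/muA pA /muB qB]; rewrite edge_weightE mulr_gt0. Qed.

Lemma mu_edges_removal x :
  mu_edges mu [fset e in E | q e != x] = mu_edges mu E - mu x * wdeg mu p q E x.
Proof.
rewrite /mu_edges -big_fset_condE [in RHS](bigID (fun e => q e == x)) /= addrAC.
rewrite /wdeg mulr_sumr [X in X - _](_ : _ = \sum_(e <- E | q e == x) mu x * mu (p e)).
  by rewrite subrr add0r.
by apply: eq_bigr => e /eqP qx; rewrite edge_weightE qx mulrC.
Qed.

Lemma vertex_removal_bound th x : 1 < th -> E != fset0 -> x \in B ->
  theta_measure th (mu_set mu A) (mu_set mu (B `\ x))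
      (mu_edges mu [fset e in E | q e != x])
    <= theta_measure th (mu_set mu A) (mu_set mu B) (mu_edges mu E) ->
  (1 - 1 / th) * mu_edges mu E <= wdeg mu p q E x * mu_set mu B.
Proof.
move=> th1 /fset0Pn[e0 e0E] xB.
have a0 : 0 < mu_set mu A := mu_set_gt0 muA (E_sub e0E).1.
have m0 : 0 < mu x := muB xB.
have mb : mu x <= mu_set mu B by apply: sum_fset_ge_term => // y /muB /ltW.
have Bx : mu_set mu (B `\ x) = mu_set mu B - mu x.
  by rewrite /mu_set (big_fsetD1 _ xB) /= addrAC subrr add0r.
have t0 : 0 <= mu x * wdeg mu p q E x.
  by rewrite mulr_ge0 ?(ltW m0) // /wdeg big_seq_cond sumr_ge0 // => e /andP[/E_sub[/muA/ltW]].
have te : mu x * wdeg mu p q E x <= mu_edges mu E.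
  rewrite -subr_ge0 -mu_edges_removal mu_edges_ge0 // => e.
  by rewrite inE => /andP[/edge_weight_gt0/ltW].
have rem_pos : mu x * wdeg mu p q E x < mu_edges mu E -> mu x < mu_set mu B.
  rewrite -subr_gt0 -mu_edges_removal => /lt0r_neq0 rem_ne0.
  rewrite -subr_gt0 -Bx.
  have /fset0Pn[e1] : [fset e in E | q e != x] != fset0.
    by apply: contra_neq rem_ne0 => ->; rewrite /mu_edges big_seq_fset0.
  rewrite !inE => /andP[e1E qx].
  apply: (mu_set_gt0 (x := q e1)); last by rewrite in_fsetD1 qx (E_sub e1E).2.
  by move=> y; rewrite in_fsetD1 => /andP[_ /muB].
have := theta_measure_removal th1 a0 (introT andP (conj m0 mb)) (introT andP (conj t0 te)) rem_pos.
rewrite -Bx -mu_edges_removal => /[apply].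
rewrite (_ : mu x * _ * _ = wdeg mu p q E x * mu_set mu B * mu x); last by ring.
by rewrite ler_pM2r.
Qed.

End VertexRemoval.

Section Neighbourhood.
Variable R : realType.
Variables (G : wbgraph R) (w0 : R).
Local Notation mu := (wb_mu G).
Local Notation E := (wb_E G).

Definition nbhd_V : {fset R} := [fset e.1 | e in E & e.2 == w0].
Definition nbhd_E : {fset R * R} := [fset e in E | e.1 \in nbhd_V].
Definition nbhd_subgraph : wbgraph R :=
  WBGraph mu nbhd_V [fset e.2 | e in nbhd_E] nbhd_E.

Lemma in_nbhd_V v : (v \in nbhd_V) = ((v, w0) \in E).
Proof.
apply/imfsetP/idP => [[[v' w] /=]|vw0E]; last by exists (v, w0); rewrite ?inE ?vw0E /=.
by rewrite !inE /= => /andP[vwE /eqP <-] ->.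
Qed.

Lemma nbhd_subgraph_sub : wb_wf G -> subgraph nbhd_subgraph G.
Proof.
move=> wfG; split=> //=; split.
  by apply/fsubsetP => v; rewrite in_nbhd_V => /(wb_wf_edge wfG) [].
split.
  apply/fsubsetP => w /imfsetP[e]; rewrite !inE /= => /andP[eE _] ->.
  exact: (wb_wf_edge wfG eE).2.
move=> e /= eE'; have := eE'; rewrite !inE /= => /andP[-> ->] /=.
by apply/imfsetP; exists e.
Qed.

Lemma nbhd_subgraph_adj v : v \in wb_V nbhd_subgraph -> (v, w0) \in wb_E nbhd_subgraph.
Proof. by rewrite /= !inE /= => vV'; rewrite vV' andbT -in_nbhd_V. Qed.

Lemma nbhd_subgraph_covered w : w \in wb_W nbhd_subgraph ->
  exists2 v, v \in wb_V nbhd_subgraph & (v, w) \in wb_E nbhd_subgraph.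
Proof.
move=> /imfsetP[[v w'] eE' /= ->]; exists v => //.
by move: eE'; rewrite !inE /= => /andP[].
Qed.

Lemma mu_set_nbhd_V : mu_set mu nbhd_V = wdeg mu fst snd E w0.
Proof.
rewrite /mu_set big_imfset /=; first by rewrite big_filter.
by move=> [v w] [v' w'] /andP[_ /eqP /= ->] /andP[_ /eqP /= ->] /= ->.
Qed.

Lemma mu_edges_nbhd_E :
  mu_edges mu nbhd_E = \sum_(v <- nbhd_V) mu v * wdeg mu snd fst E v.
Proof.
rewrite /mu_edges -big_fset_condE sum_fset_fibers; apply: eq_bigr => v _.
by rewrite /wdeg mulr_sumr; apply: eq_bigr => e /eqP ->.
Qed.

End Neighbourhood.

Section ThetaMaximal.
Variable R : realType.
Variables (th : R) (G : wbgraph R).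
Hypotheses (th1 : 1 < th) (wfG : wb_wf G) (ntG : nontrivial G)
  (maxG : theta_maximal th G).
Local Notation mu := (wb_mu G).
Local Notation V := (wb_V G).
Local Notation W := (wb_W G).
Local Notation E := (wb_E G).

Lemma theta_maximal_wdegW w : w \in W ->
  (1 - 1 / th) * mu_edges mu E <= wdeg mu fst snd E w * mu_set mu W.
Proof.
move=> wW; apply: (vertex_removal_bound (or_introl (conj erefl erefl))
  (wb_wf_muV wfG) (wb_wf_muW wfG) (fun e eE => wb_wf_edge wfG eE)) => //.
have := maxG (G' := WBGraph mu V (W `\ w) [fset e in E | e.2 != w]).
rewrite !mu_thetaE; apply; split=> //; split; first exact: fsubset_refl.
split; first exact: fsubD1set.
move=> e; rewrite !inE /= => /andP[eE ew]; have [-> ->] := wb_wf_edge wfG eE.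
by rewrite eE ew.
Qed.

Lemma theta_maximal_wdegV v : v \in V ->
  (1 - 1 / th) * mu_edges mu E <= wdeg mu snd fst E v * mu_set mu V.
Proof.
move=> vV; apply: (vertex_removal_bound (or_intror (conj erefl erefl))
  (wb_wf_muW wfG) (wb_wf_muV wfG)
  (fun e eE => let: conj e1 e2 := wb_wf_edge wfG eE in conj e2 e1)) => //.
have := maxG (G' := WBGraph mu (V `\ v) W [fset e in E | e.1 != v]).
rewrite !mu_thetaE !(theta_measureC _ _ (mu_set mu W)); apply; split=> //.
split; first exact: fsubD1set.
split; first exact: fsubset_refl.
move=> e; rewrite !inE /= => /andP[eE ev]; have [-> ->] := wb_wf_edge wfG eE.
by rewrite eE ev.
Qed.

Lemma nbhd_V_mass_bound w0 : w0 \in W ->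
  (1 - 1 / th) * mu_edges mu E <= mu_set mu (nbhd_V G w0) * mu_set mu W.
Proof. by rewrite mu_set_nbhd_V; exact: theta_maximal_wdegW. Qed.

Lemma nbhd_E_mass_bound w0 :
  (1 - 1 / th) * mu_edges mu E * mu_set mu (nbhd_V G w0)
    <= mu_edges mu (nbhd_E G w0) * mu_set mu V.
Proof.
rewrite mu_edges_nbhd_E [mu_set _ (nbhd_V _ _)]/mu_set mulr_sumr mulr_suml.
rewrite big_seq [X in _ <= X]big_seq; apply: ler_sum => v.
rewrite in_nbhd_V => /(wb_wf_edge wfG)[vV _].
by rewrite mulrC -mulrA ler_pM2l ?(wb_wf_muV wfG) // theta_maximal_wdegV.
Qed.

End ThetaMaximal.

Local Open Scope fset_scope.

Theorem lemma5p10 (R : realType) (theta : R) (G : wbgraph R) (w0 : R) :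
  2 < theta ->
  wb_wf G -> nontrivial G -> theta_maximal theta G ->
  w0 \in wb_W G ->
  exists G' : wbgraph R,
    subgraph G' G /\
    (forall v, v \in wb_V G' -> (v, w0) \in wb_E G') /\
    (forall w, w \in wb_W G' -> exists2 v, v \in wb_V G' & (v, w) \in wb_E G') /\
    mu_theta theta G <=
      powR (1 - 1 / theta) (- theta) * mu_theta (theta - 1) G'.
Proof.
move=> th2 wfG ntG maxG w0W.
have th1 : 1 < theta by apply: lt_trans th2; rewrite ltr1n.
have subG' := nbhd_subgraph_sub w0 wfG.
exists (nbhd_subgraph G w0); split=> //; split; first exact: nbhd_subgraph_adj.
split; first exact: nbhd_subgraph_covered.
have [_ [_ [/fsubsetP W'W E'E]]] := subG'.
have c0 : 0 < 1 - 1 / theta by rewrite subr_gt0 ltr_pdivrMr ?mul1r // (lt_trans ltr01).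
have e0 := mu_edges_gt0 (fun e => wb_wf_edge_weight wfG) ntG.
have b0 := mu_set_gt0 (wb_wf_muW wfG) w0W.
have hV := nbhd_V_mass_bound th1 wfG ntG maxG w0W.
have a'0 : 0 < mu_set (wb_mu G) (nbhd_V G w0).
  by rewrite -(pmulr_lgt0 _ b0) (lt_le_trans _ hV) // mulr_gt0.
have [v vV'] : exists v, v \in nbhd_V G w0.
  by apply/fset0Pn; apply: contraTneq a'0 => ->; rewrite /mu_set big_seq_fset0 ltxx.
have vw0E : (v, w0) \in wb_E G by rewrite -in_nbhd_V.
rewrite !mu_thetaE /=; apply: theta_measure_shrink hV (nbhd_E_mass_bound th1 wfG ntG maxG w0) => //.
- exact: ltW.
- exact: mu_set_gt0 (wb_wf_muV wfG) (wb_wf_edge wfG vw0E).1.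
- exact: ltW.
- apply: (mu_set_gt0 (fun w wW' => wb_wf_muW wfG (W'W w wW'))).
  by apply/imfsetP; exists (v, w0); rewrite //= !inE vw0E.
- by apply: mu_edges_ge0 => e /E'E /and3P[/(wb_wf_edge_weight wfG) /ltW].
- apply: sum_fset_le_subset; first exact/fsubsetP.
  by move=> w /(wb_wf_muW wfG) /ltW.
Qed.
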